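(* Let $p\neq 2$ and $q\neq 2$ be primes and let $\lambda_1\le\cdots\le\lambda_n$ be positive integers. Set $G=Z_{p^{\lambda_1}}\times\cdots\times Z_{p^{\lambda_n}}$ and $G'=Z_{q^{\lambda_1}}\times\cdots\times Z_{q^{\lambda_n}}$. Then $\mathrm{Char}(G)\cong\mathrm{Char}(G')$.
   Context: $\mathrm{Char}(G)$ denotes the lattice of characteristic subgroups of $G$. *)

From mathcomp Require Import all_boot all_order all_fingroup all_solvable.
Set Implicit Arguments.
Unset Strict Implicit.
Unset Printing Implicit Defensive.

Local Open Scope group_scope.

Definition Char (gT : finGroupType) (G : {group gT}) : {set {group gT}} :=
  [set H : {group gT} | H \char G].

(* Isomorphism of the lattices Char(G) and Char(G'): an inclusion-preserving
   and inclusion-reflecting bijection between them (an order isomorphism of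
   lattices is the same as a lattice isomorphism). *)
Definition Char_iso (gT gT' : finGroupType) (G : {group gT}) (G' : {group gT'}) :=
  exists (f : {group gT} -> {group gT'}) (g : {group gT'} -> {group gT}),
    [/\ {in Char G, forall H, f H \in Char G'},
        {in Char G', forall K, g K \in Char G},
        {in Char G, cancel f g},
        {in Char G', cancel g f} &
        {in Char G &, forall H K, (f H \subset f K) = (H \subset K)}].

From mathcomp Require Import all_boot all_order all_fingroup all_solvable.
From mathcomp Require Import zify.

Set Implicit Arguments.
Unset Strict Implicit.
Unset Printing Implicit Defensive.

Local Open Scope group_scope.

(* Write G = <x_1> x ... x <x_n> with #[x_i] = p^lam_i, and record a subgroup
   H by its profile e_i = log_p |H :&: <x_i>|.  For p odd, a characteristic
   subgroup is the product of its intersections with the factors: the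
   automorphisms fixing all factors but the i-th and sending x_i to x_i^-1
   (resp. to x_i * x_j^(p^(lam_j - lam_i))) show that H contains the square of
   each component (resp. bound e_j in terms of e_i), and squaring is invertible
   in an odd-order group.  Conversely every profile obeying these bounds,
   lam_j - e_j <= (lam_j - lam_i) + (lam_i - e_i), is realised by the
   characteristic subgroup prod_i Mho^(lam_i - e_i)(Ohm_(lam_i)(G)).  So
   Char(G) is isomorphic, as a poset, to a set of profiles ordered pointwise
   that depends on lam only, not on p. *)

Section DirectProducts.

Variable gT : finGroupType.
Implicit Types (G H K : {group gT}).

Lemma Ohm_bigdprod k I r P (F : I -> {set gT}) G :
    \big[dprod/1]_(i <- r | P i) F i = G ->
  \big[dprod/1]_(i <- r | P i) 'Ohm_k(F i) = 'Ohm_k(G).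
Proof.
elim/big_ind2: _ G => [_ <-|A B C D IHA IHB G dG|_ _ G ->]; rewrite ?Ohm1 //.
case/dprodP: dG IHA IHB (dG) => [[H K -> ->] _ _ _] IHH IHK dG.
by rewrite (IHH H) // (IHK K) // (Ohm_dprod k dG).
Qed.

Lemma Mho_bigdprod k I r P (F : I -> {set gT}) G :
    \big[dprod/1]_(i <- r | P i) F i = G ->
  \big[dprod/1]_(i <- r | P i) 'Mho^k(F i) = 'Mho^k(G).
Proof.
elim/big_ind2: _ G => [_ <-|A B C D IHA IHB G dG|_ _ G ->]; rewrite ?Mho1 //.
case/dprodP: dG IHA IHB (dG) => [[H K -> ->] _ _ _] IHH IHK dG.
by rewrite (IHH H) // (IHK K) // (Mho_dprod k dG).
Qed.

Lemma mem_sqr_odd_order H y : odd #[y] -> (y ^+ 2 \in H) = (y \in H).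
Proof.
move=> odd_y; apply/idP/idP => [y2H | yH]; last exact: groupX.
have y_sqrt : (y ^+ 2) ^+ (#[y].+1)./2 = y.
  have e2 : (2 * (#[y].+1)./2 = #[y].+1)%N.
    by rewrite mul2n -[RHS]odd_double_half /= odd_y.
  by rewrite -expgM e2 expgSr expg_order mul1g.
by rewrite -y_sqrt groupX.
Qed.

(* In an abelian group <[a]> \x K, sending a to t and fixing K is an
   automorphism as soon as #[t] divides #[a] and <[t]> * K contains a. *)
Lemma char_cycle_dprod_stable G H K a t :
    <[a]> \x K = G -> abelian G -> t \in G -> #[t] %| #[a] ->
    a \in <[t]> * K -> H \char G ->
  forall m r, r \in K -> a ^+ m * r \in H -> t ^+ m * r \in H.
Proof.
move=> defG cGG tG dv_ta a_tK chH m r rK amrH.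
have sKG : K \subset G by have /dprodP[_ <- _ _] := defG; apply: mulG_subr.
have cfK : idm K @* K \subset 'C(eltm dv_ta @* <[a]>).
  rewrite im_eltm morphim_idm //.
  by apply: sub_abelian_cent2 cGG _ _; rewrite ?cycle_subG.
set phi := dprodm defG cfK.
have im_phi : phi @* G = G.
  have im_phiE : phi @* G = <[t]> * K.
    by rewrite im_dprodm im_eltm morphim_idm.
  apply/eqP; rewrite eqEsubset; apply/andP; split.
    by rewrite im_phiE (mul_subG _ sKG) ?cycle_subG.
  by rewrite -{1}(dprodW defG) mulG_subG cycle_subG /= im_phiE a_tK mulG_subr.
have inj_phi : 'injm phi by rewrite -card_im_injm im_phi.
have /charP[sHG /(_ phi inj_phi im_phi) phiH] := chH.
have := mem_morphim phi (subsetP sHG _ amrH) amrH.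
by rewrite phiH /phi /= (dprodmE defG cfK) ?groupX ?cycle_id //= eltmE.
Qed.

End DirectProducts.

Definition admissible n (lam e : 'I_n -> nat) :=
  (forall i, e i <= lam i)%N /\
  (forall i j, lam j - e j <= (lam j - lam i) + (lam i - e i))%N.

Section CycleDecomposition.

Variables (gT : finGroupType) (p n : nat) (lam : 'I_n -> nat).
Variables (G : {group gT}) (x : 'I_n -> gT).
Hypothesis p_pr : prime p.
Hypothesis defG : \big[dprod/1]_(i < n) <[x i]> = G.
Hypothesis o_x : forall i, #[x i] = (p ^ lam i)%N.

Implicit Types (H : {group gT}) (e : 'I_n -> nat).

Lemma mem_x i : x i \in G.
Proof.
rewrite -(bigdprodWY defG) mem_gen //; apply/bigcupP; exists i => //.
exact: cycle_id.
Qed.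

Lemma abelian_G : abelian G.
Proof.
apply/center_idP; rewrite -(center_bigdprod defG) -[RHS]defG.
by apply: eq_bigr => i _; apply/center_idP/cycle_abelian.
Qed.

Lemma p_elt_x i : p.-elt (x i).
Proof. by rewrite /p_elt o_x pnatX pnat_id. Qed.

Definition cofactor j : {group gT} :=
  <<\bigcup_(k < n | k != j) <[x k]> >>%G.

Lemma cofactor_dprod j : <[x j]> \x cofactor j = G.
Proof.
move: defG; rewrite (bigD1 j) //= => dG.
have [[A B _ defB] _ _ _] := dprodP dG.
by rewrite defB in dG; rewrite -dG /cofactor (bigdprodWY defB).
Qed.

Lemma mem_cofactor j k : k != j -> x k \in cofactor j.
Proof.
by move=> kj; rewrite mem_gen //; apply/bigcupP; exists k => //; apply: cycle_id.
Qed.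

Fact cycle_proj_subproof j :
  trivm (cofactor j) @* cofactor j \subset 'C(idm <[x j]> @* <[x j]>).
Proof. by rewrite morphim_trivm sub1G. Qed.

Definition cycle_proj j := dprodm (cofactor_dprod j) (cycle_proj_subproof j).

Lemma cycle_projE j a r :
  a \in <[x j]> -> r \in cofactor j -> cycle_proj j (a * r) = a.
Proof. by move=> xa Kr; rewrite /cycle_proj (dprodmE _ _ xa Kr) /= mulg1. Qed.

Lemma cycle_proj_prod j (c : 'I_n -> gT) :
  (forall i, c i \in <[x i]>) -> cycle_proj j (\prod_i c i) = c j.
Proof.
move=> c_x; rewrite /cycle_proj (morph_prod (dprodm_morphism _ _)) => [|i _].
  2: by apply: subsetP (c_x i); rewrite cycle_subG mem_x.
rewrite (eq_bigr (fun i => if i == j then c j else 1)) => [|i _].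
  by rewrite -big_mkcond big_pred1_eq.
change (cycle_proj j (c i) = if i == j then c j else 1).
have [-> | ij] := eqVneq i j; first by rewrite -{1}[c j]mulg1 cycle_projE.
rewrite -[c i]mul1g cycle_projE //.
by apply: subsetP (c_x i); rewrite cycle_subG mem_cofactor.
Qed.

Definition profile H i := logn p #|H :&: <[x i]>|.

Definition profile_subg e : {group gT} :=
  << \bigcup_(j < n) <[x j ^+ (p ^ (lam j - e j))]> >>%G.

Lemma profile_le H i : (profile H i <= lam i)%N.
Proof.
rewrite /profile -(pfactorK (lam i) p_pr) -(o_x i) orderE.
by apply: dvdn_leq_log; rewrite ?cardG_gt0 ?cardSg ?subsetIr.
Qed.

Lemma cap_cycle_profile H i :
  H :&: <[x i]> = <[x i ^+ (p ^ (lam i - profile H i))]>.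
Proof.
apply/eqP; rewrite (eq_subG_cyclic (cycle_cyclic (x i))) ?subsetIr ?cycleX //.
rewrite -orderE (orderXexp _ (o_x i)) subKn ?profile_le //.
by rewrite /profile -card_pgroup // (pgroupS (subsetIr _ _) (p_elt_x i)).
Qed.

Lemma profile_subg_cap_cycle e i :
  profile_subg e :&: <[x i]> = <[x i ^+ (p ^ (lam i - e i))]>.
Proof.
pose A := <[x i ^+ (p ^ (lam i - e i))]>%G.
have sAx : A \subset <[x i]> := cycleX _ _.
have [_ _ cxK tixK] := dprodP (cofactor_dprod i).
have cAK : commute A (cofactor i).
  by apply: centC; rewrite (subset_trans sAx) // centsC.
have AKx : A * (cofactor i :&: <[x i]>) = A by rewrite setIC tixK mulg1.
apply/eqP; rewrite eqEsubset subsetI sAx andbT; apply/andP; split.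
  rewrite -{1}AKx group_modl // setSI // -(comm_joingE cAK) gen_subG.
  apply/bigcupsP => j _; have [-> | ji] := eqVneq j i; first exact: joing_subl.
  by rewrite cycle_subG (subsetP (joing_subr _ _)) // groupX ?mem_cofactor.
by rewrite cycle_subG mem_gen //; apply/bigcupP; exists i => //; apply: cycle_id.
Qed.

Lemma profile_subgK e :
  (forall i, e i <= lam i)%N -> profile (profile_subg e) =1 e.
Proof.
move=> le_e i; rewrite /profile profile_subg_cap_cycle -orderE.
by rewrite (orderXexp _ (o_x i)) subKn // pfactorK.
Qed.

Lemma eq_profile_subg e e' : e =1 e' -> profile_subg e = profile_subg e'.
Proof.
by move=> eq_e; apply: val_inj; congr <<_>>; apply: eq_bigr => j _; rewrite eq_e.
Qed.

Lemma profile_subgS e e' :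
    (forall i, e i <= lam i)%N -> (forall i, e' i <= lam i)%N ->
  (profile_subg e \subset profile_subg e') = [forall i, e i <= e' i]%N.
Proof.
move=> le_e le_e'; apply/idP/forallP => [sCC' i | le_ee'].
  have := cardSg (setSI <[x i]> sCC'); rewrite /= !profile_subg_cap_cycle -!orderE.
  rewrite !(orderXexp _ (o_x i)) !subKn // dvdn_Pexp2l //; exact: prime_gt1.
rewrite gen_subG; apply/bigcupsP => j _; rewrite cycle_subG mem_gen //.
apply/bigcupP; exists j => //.
have -> : (lam j - e j = (lam j - e' j) + (e' j - e j))%N.
  by move: (le_ee' j) (le_e' j); lia.
by rewrite expnD expgM mem_cycle.
Qed.

Lemma admissible_profile H : H \char G -> admissible lam (profile H).
Proof.
move=> chH; split=> [|i j]; first exact: profile_le.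
have [<- | ji] := eqVneq j i; first by lia.
set k := x j ^+ (p ^ (lam j - lam i)); set m := (p ^ (lam i - profile H i))%N.
have Kk : k \in cofactor i by rewrite groupX ?mem_cofactor.
have cxk : commute (x i) k by apply: (centsP abelian_G); rewrite ?groupX ?mem_x.
have dv_xk : #[x i * k] %| #[x i].
  rewrite order_dvdn o_x expgMn // -o_x expg_order mul1g /k -expgM.
  by rewrite o_x -expnD -order_dvdn o_x dvdn_Pexp2l ?prime_gt1 //; lia.
have x_xkK : x i \in <[x i * k]> * cofactor i.
  by rewrite -{1}(mulgK k (x i)) mem_mulg ?cycle_id ?groupV.
have xmH : x i ^+ m \in H.
  have : x i ^+ m \in H :&: <[x i]> by rewrite cap_cycle_profile cycle_id.
  by case/setIP.
have := char_cycle_dprod_stable (cofactor_dprod i) abelian_G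
  (groupM (mem_x i) (groupX _ (mem_x j))) dv_xk x_xkK chH (group1 _).
move=> /(_ m); rewrite !mulg1 => /(_ xmH); rewrite expgMn // groupMl // => kmH.
have : k ^+ m \in H :&: <[x j]> by rewrite inE kmH /k -expgM mem_cycle.
rewrite cap_cycle_profile /k -expgM -expnD => /order_dvdG.
rewrite -orderE !(orderXexp _ (o_x j)) dvdn_Pexp2l ?prime_gt1 //.
by have := profile_le H j; lia.
Qed.

Lemma prod_Mho_Ohm_profile_subg e : admissible lam e ->
  (\prod_(i < n) 'Mho^(lam i - e i)('Ohm_(lam i)(G))%G)%G :=: profile_subg e.
Proof.
move=> [le_e adm_e]; apply/eqP; rewrite eqEsubset bigprodGE; apply/andP; split.
  rewrite gen_subG; apply/bigcupsP => i _ /=.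
  rewrite -(bigdprodWY (Mho_bigdprod _ (Ohm_bigdprod (lam i) defG))) gen_subG.
  apply/bigcupsP => j _.
  rewrite (Ohm_p_cycle _ (p_elt_x j)) (Mho_p_cycle _ (p_eltX _ (p_elt_x j))).
  rewrite cycle_subG -expgM -expnD o_x pfactorK //.
  set a := ((lam j - lam i) + (lam i - e i))%N.
  have -> : a = ((lam j - e j) + (a - (lam j - e j)))%N by have := adm_e i j; lia.
  rewrite expnD expgM mem_gen //; apply/bigcupP; exists j => //.
  exact: mem_cycle.
rewrite gen_subG; apply/bigcupsP => j _; rewrite cycle_subG mem_gen //.
apply/bigcupP; exists j => //=; apply: Mho_p_elt (p_elt_x j).
have sxG : <[x j]> \subset G by rewrite cycle_subG mem_x.
apply: subsetP (OhmS _ sxG) _ _.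
by rewrite (Ohm_p_cycle _ (p_elt_x j)) o_x pfactorK // subnn expn0 expg1 cycle_id.
Qed.

Lemma char_profile_subg e : admissible lam e -> profile_subg e \char G.
Proof.
move=> adm_e; rewrite -(prod_Mho_Ohm_profile_subg adm_e).
elim/big_ind: _ => [|A B chA chB|i _].
- exact: char1.
- exact: charY.
- exact: char_trans (Mho_char _ _) (Ohm_char _ _).
Qed.

Section OddOrder.

Hypothesis p_odd : odd p.

Lemma odd_order_G y : y \in G -> odd #[y].
Proof.
have pG : p.-group G.
  rewrite /pgroup -(bigdprod_card defG); elim/big_ind: _ => // [a b|i _].
    by rewrite pnatM => -> ->.
  by rewrite -orderE; apply: p_elt_x.
by move=> /(mem_p_elt pG)/p_natP[k ->]; rewrite oddX p_odd orbT.
Qed.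

Lemma char_component_mem H j a r : H \char G ->
  a \in <[x j]> -> r \in cofactor j -> a * r \in H -> a \in H.
Proof.
move=> chH /cycleP[m ->] rK amrH.
have dv_inv : #[(x j)^-1] %| #[x j] by rewrite orderV.
have x_invK : x j \in <[(x j)^-1]> * cofactor j.
  by rewrite cycleV (subsetP (mulG_subl _ _)) ?cycle_id.
have := char_cycle_dprod_stable (cofactor_dprod j) abelian_G (groupVr (mem_x j))
  dv_inv x_invK chH rK amrH.
rewrite -(mem_sqr_odd_order _ (odd_order_G (groupX m (mem_x j)))) => invmrH.
have := groupM amrH (groupVr invmrH).
by rewrite invMg expVgn invgK mulgA mulgK -expgD addnn -mul2n mulnC expgM.
Qed.

Lemma char_profile_subgE H : H \char G -> H :=: profile_subg (profile H).
Proof.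
move=> chH; apply/eqP; rewrite eqEsubset; apply/andP; split; last first.
  rewrite gen_subG; apply/bigcupsP => j _.
  by rewrite /= -cap_cycle_profile subsetIl.
apply/subsetP => h hH; have hG := subsetP (char_sub chH) h hH.
have [c [c_x def_h _]] := mem_bigdprod defG hG.
rewrite def_h; apply: group_prod => j _.
have [a [r [x_a Kr def_ar _]]] := mem_dprod (cofactor_dprod j) hG.
have cjH : c j \in H.
  have -> : c j = a.
    by rewrite -(cycle_proj_prod j (fun i => c_x i isT)) -def_h def_ar cycle_projE.
  by apply: char_component_mem chH x_a Kr _; rewrite -def_ar.
have : c j \in H :&: <[x j]> by rewrite inE cjH c_x.
rewrite cap_cycle_profile => cj; rewrite mem_gen //; apply/bigcupP; exists j => //.
Qed.

Lemma profileK H : H \char G -> profile_subg (profile H) = H.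
Proof. by move/char_profile_subgE=> defH; apply: val_inj; rewrite /= -defH. Qed.

End OddOrder.

End CycleDecomposition.

Arguments eq_profile_subg {gT p n lam x e e'}.

Theorem mainTheorem7 (p q n : nat) (lam : 'I_n -> nat)
    (gT gT' : finGroupType) (G : {group gT}) (G' : {group gT'})
    (x : 'I_n -> gT) (y : 'I_n -> gT') :
  prime p -> p != 2 -> prime q -> q != 2 ->
  (forall i, (0 < lam i)%N) ->
  (forall i j : 'I_n, (i <= j)%N -> (lam i <= lam j)%N) ->
  \big[dprod/1]_(i < n) <[x i]> = G ->
  (forall i, #[x i] = (p ^ lam i)%N) ->
  \big[dprod/1]_(i < n) <[y i]> = G' ->
  (forall i, #[y i] = (q ^ lam i)%N) ->
  Char_iso G G'.
Proof.
move=> p_pr p_n2 q_pr q_n2 _ _ defG o_x defG' o_y.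
have odd_prime r : prime r -> r != 2 -> odd r.
  by move=> r_pr; apply: contraR => /(prime_oddPn r_pr)->.
have p_odd := odd_prime p p_pr p_n2; have q_odd := odd_prime q q_pr q_n2.
exists (fun H => profile_subg q lam y (profile p x H)).
exists (fun K => profile_subg p lam x (profile q y K)).
split=> [H | K | H | K | H K]; rewrite ?inE.
- by move/(admissible_profile p_pr defG o_x)/(char_profile_subg q_pr defG' o_y).
- by move/(admissible_profile q_pr defG' o_y)/(char_profile_subg p_pr defG o_x).
- move=> chH; have le_H := profile_le p_pr o_x H.
  rewrite (eq_profile_subg (profile_subgK q_pr defG' o_y le_H)).
  exact: profileK p_pr defG o_x p_odd H chH.
- move=> chK; have le_K := profile_le q_pr o_y K.
  rewrite (eq_profile_subg (profile_subgK p_pr defG o_x le_K)).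
  exact: profileK q_pr defG' o_y q_odd K chK.
- move=> chH chK; rewrite -[in RHS](profileK p_pr defG o_x p_odd chH).
  rewrite -[in RHS](profileK p_pr defG o_x p_odd chK).
  by rewrite (profile_subgS q_pr defG' o_y) ?(profile_subgS p_pr defG o_x) // => i;
    apply: profile_le.
Qed.
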